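(* Let $G$ be a finite group and $H\subseteq G$ a subgroup which possesses a complete mapping. Let $H\backslash G/H$ denote the set of double cosets $HxH$ ($x\in G$). Suppose $\phi$ and $\psi$ are permutations of $H\backslash G/H$ such that for every $D\in H\backslash G/H$ we have $|D|=|\phi(D)|=|\psi(D)|$ and $D\,\phi(D)\supseteq\psi(D)$ (where $D\,\phi(D)$ is the set of products $gg'$ with $g\in D$, $g'\in\phi(D)$). Then $G$ possesses a complete mapping.
   Context: A complete mapping of a group $G$ is a bijection $\phi:G\to G$ such that $g\mapsto g\phi(g)$ is also a bijection of $G$; equivalently, there are an index set $I$ and bijections $a,b,c:I\to G$ with $a(i)b(i)=c(i)$ for all $i\in I$. *)

From mathcomp Require Import all_boot all_fingroup.
Set Implicit Arguments. Unset Strict Implicit. Unset Printing Implicit Defensive.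
Local Open Scope group_scope.

(* For finite K, a map K -> K that is
   injective on K is a bijection of K; x * f x automatically lies in K. *)
Definition has_complete_mapping (gT : finGroupType) (K : {group gT}) : Prop :=
  exists f : gT -> gT,
    [/\ {in K, forall x, f x \in K},
        {in K &, injective f} &
        {in K &, injective (fun x => x * f x)}].

Definition double_cosets (gT : finGroupType) (H G : {set gT}) : {set {set gT}} :=
  [set (H :* x) * H | x in G].

Definition is_perm_on (T : finType) (S : {set T}) (phi : T -> T) : Prop :=
  {in S, forall D, phi D \in S} /\ {in S &, injective phi}.

From mathcomp Require Import all_boot all_fingroup.
From mathcomp Require Import zify.
Set Implicit Arguments. Unset Strict Implicit. Unset Printing Implicit Defensive.

(* The double cosets partition G and phi, psi permute them, so it suffices to
   find, for each double coset D with E = phi D and F = psi D = HzH, an injection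
   f : D -> E such that d |-> d f(d) is an injection D -> F.
   The bipartite graph {(d, e) in D x E | d e in F} is regular, so Hall's theorem
   matches the right cosets Hr of D with distinct left cosets tH of E, with t
   chosen so that r t lies in Hz.  Let C = H :&: H^(z^-1).  Pick e = e(r) in H in
   distinct right cosets of C for distinct rows (possible as |D| <= |HzH| =
   |H| |H : C|), and a bijection L of H with L(c q) = c^z L(q) for c in C (C and
   C^z have the same index in H).  For d in Hr put p = d t z^-1 in H and
   f(d) = t L(e f0(p e)), where f0 is a complete mapping of H.  From f(d) one
   reads off the coset tH, hence r, then p e, hence d.  From
   d f(d) = p z L(e f0(p e)) the twisting of L recovers the C-coset of e, hence r,
   and the product p e f0(p e), hence p e and d. *)

Section Hall.
Variables (T U : finType).
Implicit Types (N : T -> {set U}) (A S : {set T}) (M : {set U}) (g : T -> U).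

Definition hall_condition N A :=
  forall S, S \subset A -> #|S| <= #|\bigcup_(t in S) N t|.

Definition sdr N A g := {in A, forall t, g t \in N t} /\ {in A &, injective g}.

Lemma bigcup_setD N S M : \bigcup_(t in S) (N t :\: M) = (\bigcup_(t in S) N t) :\: M.
Proof.
apply/setP=> u; rewrite in_setD; apply/bigcupP/andP => [[t tS]|[uM /bigcupP[t tS uN]]].
  by rewrite in_setD => /andP[uM uN]; split=> //; apply/bigcupP; exists t.
by exists t; rewrite // in_setD uM.
Qed.

Lemma sdr_setU N A1 A2 M g1 g2 :
  sdr N A1 g1 -> {in A1, forall t, g1 t \in M} -> sdr (fun t => N t :\: M) A2 g2 ->
  sdr N (A1 :|: A2) (fun t => if t \in A1 then g1 t else g2 t).
Proof.
move=> [g1N g1I] g1M [g2N g2I].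
have g2NM t : t \in A2 -> g2 t \notin M /\ g2 t \in N t.
  by move/g2N; rewrite inE => /andP[].
have inA2 u : u \in A1 = false -> u \in A1 :|: A2 -> u \in A2.
  by move=> uA1; rewrite inE uA1.
split=> [t tA|t t']; first by case: ifP => [/g1N//|/inA2/(_ tA)/g2NM[]].
move=> tA t'A; case: ifP => tA1; case: ifP => t'A1; first exact: g1I.
- by move=> e; have [] := g2NM t' (inA2 _ t'A1 t'A); rewrite -e g1M.
- by move=> e; have [] := g2NM t (inA2 _ tA1 tA); rewrite e g1M.
- by apply: g2I; apply: inA2.
Qed.

Lemma hall_condition_sub N A S : hall_condition N A -> S \subset A -> hall_condition N S.
Proof. by move=> hA sSA S' sS'S; apply: hA (subset_trans sS'S sSA). Qed.

Section HallInduction.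
Variable n : nat.
Hypothesis IH : forall N A, #|A| <= n -> hall_condition N A -> exists g, sdr N A g.

Lemma hall_tight_step N A S0 :
  #|A| <= n.+1 -> hall_condition N A -> S0 \proper A -> S0 != set0 ->
  #|\bigcup_(t in S0) N t| <= #|S0| -> exists g, sdr N A g.
Proof.
move=> leA hallA ltS0A S0n0 tightS0; set M := \bigcup_(t in S0) N t in tightS0.
have sS0A := proper_sub ltS0A; have ltS0 := proper_card ltS0A.
have [g1 g1P] : exists g, sdr N S0 g.
  by apply: IH (hall_condition_sub hallA sS0A); lia.
have [g2 g2P] : exists g, sdr (fun t => N t :\: M) (A :\: S0) g.
  apply: IH => [|S sS].
    by rewrite cardsD (setIidPr sS0A); rewrite -card_gt0 in S0n0; lia.
  have SS0 : S :&: S0 = set0.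
    apply/setP=> t; rewrite !inE; apply/andP=> -[/(subsetP sS)].
    by rewrite inE => /andP[/negPf->].
  have := hallA (S :|: S0); rewrite bigcup_setU -/M subUset sS0A.
  rewrite (subset_trans sS (subsetDl _ _)) cardsU SS0 cards0 bigcup_setD => /(_ isT).
  set X := \bigcup_(t in S) N t; rewrite cardsU cardsD.
  have := subset_leq_card (subsetIl X M); lia.
exists (fun t => if t \in S0 then g1 t else g2 t).
rewrite -(setID A S0) (setIidPr sS0A); apply: sdr_setU g2P => // t tS0.
by apply/bigcupP; exists t => //; apply: g1P.1.
Qed.

Lemma hall_slack_step N A a :
  #|A| <= n.+1 -> hall_condition N A -> a \in A ->
  (forall S, S \proper A -> S != set0 -> #|S| < #|\bigcup_(t in S) N t|) ->
  exists g, sdr N A g.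
Proof.
move=> leA hallA aA slackA.
have /card_gt0P[u uNa] : 0 < #|N a|.
  by have := hallA [set a]; rewrite sub1set aA big_set1 cards1; apply.
have [g g_sdr] : exists g, sdr (fun t => N t :\: [set u]) (A :\ a) g.
  apply: IH => [|S sS]; first by rewrite (cardsD1 a A) aA in leA; lia.
  have [->|S0] := eqVneq S set0; first by rewrite cards0.
  have ltSA : S \proper A.
    rewrite properEneq (subset_trans sS (subsetDl _ _)) andbT.
    by apply: contraTneq aA => <-; apply/negP=> /(subsetP sS); rewrite !inE eqxx.
  have := slackA S ltSA S0; rewrite bigcup_setD (cardsD1 u (\bigcup_(t in S) N t)).
  by case: (u \in _) => /=; lia.
exists (fun t => if t \in [set a] then u else g t).
rewrite -(setD1K aA); apply: sdr_setU g_sdr => [|t]; last by rewrite set11.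
by split=> [t /set1P-> //| t t' /set1P-> /set1P->].
Qed.

End HallInduction.

Lemma hall_marriage (u0 : U) N A : hall_condition N A -> exists g, sdr N A g.
Proof.
move: {2}#|A| (leqnn #|A|) => n; elim: n N A => [|n IH] N A leA hallA.
  exists (fun=> u0); suff -> : A = set0 by split=> t; rewrite inE.
  by apply/eqP; rewrite -cards_eq0 -leqn0.
have [->|[a aA]] := set_0Vmem A; first by exists (fun=> u0); split=> t; rewrite inE.
have [/existsP[S0 /and3P[]]|slackA] := boolP [exists S0 : {set T},
    [&& S0 \proper A, S0 != set0 & #|\bigcup_(t in S0) N t| <= #|S0|]].
  exact: hall_tight_step IH _ _ _ leA hallA.
apply: hall_slack_step IH _ _ _ leA hallA aA _ => S ltSA S0.
rewrite ltnNge; apply/negP=> tightS.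
by case/existsP: slackA; exists S; rewrite ltSA S0 tightS.
Qed.

Lemma sdr_of_leq_card (u0 : U) A (B : {set U}) : #|A| <= #|B| -> exists g, sdr (fun=> B) A g.
Proof.
move=> leAB; apply: (hall_marriage u0) => S sSA.
have [->|[t tS]] := set_0Vmem S; first by rewrite cards0.
rewrite (leq_trans (subset_leq_card sSA)) // (leq_trans leAB) // subset_leq_card //.
by apply/subsetP=> u uB; apply/bigcupP; exists t.
Qed.

Lemma regular_hall_condition (R : T -> U -> bool) A (B : {set U}) k :
    0 < k -> {in A, forall a, \sum_(b in B) R a b = k} ->
    {in B, forall b, \sum_(a in A) R a b = k} ->
  hall_condition (fun a => [set b in B | R a b]) A.
Proof.
move=> k_gt0 degA degB S sSA; set NS := \bigcup_(a in S) _.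
have sNSB : NS \subset B by apply/bigcupsP=> a _; apply/subsetP=> b; rewrite inE => /andP[].
rewrite -(leq_pmul2r k_gt0) -!sum_nat_const.
rewrite (eq_bigr _ (fun a aS => esym (degA a (subsetP sSA a aS)))) exchange_big /=.
rewrite (big_setID NS) (setIidPr sNSB) /= [X in _ + X]big1 ?addn0 => [|b].
  apply: leq_sum => b /(subsetP sNSB) bB; rewrite -(degB b bB).
  by rewrite [X in _ <= X](big_setID S) (setIidPr sSA) leq_addr.
rewrite !inE => /andP[bNS bB]; apply: big1 => a aS; apply/eqP; rewrite eqb0.
by apply: contra bNS => Rab; apply/bigcupP; exists a; rewrite // inE bB.
Qed.

End Hall.

Local Open Scope group_scope.

Section DoubleCosets.
Variables (gT : finGroupType) (H : {group gT}).
Implicit Types (x y z a b d : gT).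

Definition dcoset x := H :* x * H.

Lemma mem_dcoset x y :
  reflect (exists2 a, a \in H & exists2 b, b \in H & y = a * x * b) (y \in dcoset x).
Proof.
apply: (iffP mulsgP) => [[_ b /rcosetP[a aH ->] bH ->]|[a aH [b bH ->]]].
  by exists a => //; exists b.
by exists (a * x) b => //; apply/rcosetP; exists a.
Qed.

Lemma dcoset_refl x : x \in dcoset x.
Proof. by apply/mem_dcoset; exists 1 => //; exists 1; rewrite ?mulg1 ?mul1g. Qed.

Lemma dcosetMl a x y : a \in H -> (a * y \in dcoset x) = (y \in dcoset x).
Proof.
move=> aH; apply/mem_dcoset/mem_dcoset=> -[c cH [b bH e]]; last first.
  by exists (a * c); rewrite ?groupM //; exists b; rewrite // e !mulgA.
exists (a^-1 * c); rewrite ?groupM ?groupV //; exists b => //.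
by rewrite -[y](mulKg a) e !mulgA.
Qed.

Lemma dcosetMr a x y : a \in H -> (y * a \in dcoset x) = (y \in dcoset x).
Proof.
move=> aH; apply/mem_dcoset/mem_dcoset=> -[c cH [b bH e]]; last first.
  by exists c => //; exists (b * a); rewrite ?groupM // e !mulgA.
exists c => //; exists (b * a^-1); rewrite ?groupM ?groupV //.
by rewrite -[y](mulgK a) e !mulgA.
Qed.

Lemma dcoset_transl x y : y \in dcoset x -> dcoset y = dcoset x.
Proof.
case/mem_dcoset=> a aH [b bH ->]; apply/setP=> t.
apply/mem_dcoset/mem_dcoset=> -[c cH [d dH ->]].
  by exists (c * a); rewrite ?groupM //; exists (b * d); rewrite ?groupM // !mulgA.
exists (c * a^-1); rewrite ?groupM ?groupV //; exists (b^-1 * d); rewrite ?groupM ?groupV //.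
by rewrite !mulgA mulgKV mulgK.
Qed.

Lemma card_dcoset z : #|dcoset z| = (#|H| * #|H : H :&: H :^ z^-1|)%N.
Proof.
have dcosetV : [set t * z^-1 | t in dcoset z] = H * H :^ z^-1.
  apply/setP=> u; apply/imsetP/mulsgP=> [[_ /mem_dcoset[a aH [b bH ->]] ->]|[a k aH]].
    by exists a (b ^ z^-1); rewrite ?memJ_conjg // conjgE invgK !mulgA.
  rewrite mem_conjgV => kzH ->; exists (a * z * k ^ z).
    by apply/mem_dcoset; exists a => //; exists (k ^ z).
  by rewrite conjgE !mulgA mulgK mulgK.
have := mul_cardG H (H :^ z^-1)%G; rewrite /= cardJg -dcosetV card_in_imset; last first.
  by move=> t t' _ _ /mulIg.
rewrite indexgI => card_prod; apply/eqP.
rewrite -(eqn_pmul2r (cardG_gt0 [group of H :&: H :^ z^-1])) -card_prod /=.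
by rewrite -mulnA [(#|H : _| * _)%N]mulnC (LagrangeI H (H :^ z^-1)%G).
Qed.

Definition rrep x := repr (H :* x).

Lemma rrepM a x : a \in H -> rrep (a * x) = rrep x.
Proof. by move=> aH; rewrite /rrep rcosetM (rcoset_id aH). Qed.

Lemma rrepK x : rrep (rrep x) = rrep x.
Proof. by rewrite /rrep rcoset_repr. Qed.

Lemma mulgV_rrep x : x * (rrep x)^-1 \in H.
Proof.
have /rcosetP[a aH] := mem_repr_rcoset H x.
by rewrite /rrep => ->; rewrite invMg mulKVg groupV.
Qed.

Lemma rrep_dcoset x y : (rrep y \in dcoset x) = (y \in dcoset x).
Proof. by rewrite -{2}(mulgKV (rrep y) y) dcosetMl ?mulgV_rrep. Qed.

Lemma card_rrep_preim (S : {set gT}) :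
  {in S, forall r, rrep r = r} -> #|[set d | rrep d \in S]| = (#|S| * #|H|)%N.
Proof.
move=> rrepS; rewrite -cardsX -(card_in_imset (f := fun p : gT * gT => p.2 * p.1)).
  apply: eq_card => d; rewrite inE; apply/idP/imsetP=> [dS|[[r a]]].
    by exists (rrep d, d * (rrep d)^-1); rewrite /= ?mulgKV // inE dS mulgV_rrep.
  by case/setXP=> rS aH ->; rewrite /= rrepM ?rrepS.
move=> [r a] [r' a'] /setXP[rS aH] /setXP[r'S a'H] /= ar_eq.
have eq_r : r = r' by rewrite -(rrepS r rS) -(rrepS r' r'S) -(rrepM _ aH) ar_eq rrepM.
by move: ar_eq; rewrite eq_r => /mulIg->.
Qed.

End DoubleCosets.

Section RowMatching.
Variables (gT : finGroupType) (H : {group gT}) (x y z : gT).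
Local Notation D := (dcoset H x).
Local Notation E := (dcoset H y).
Local Notation F := (dcoset H z).

Definition row_degree d := \sum_(e in E) ((d * e)%g \in F).
Definition col_degree e := \sum_(d in D) ((d * e)%g \in F).

Lemma row_degree_dcoset : {in D, forall d, row_degree d = row_degree x}.
Proof.
move=> _ /mem_dcoset[a aH [b bH ->]]; rewrite /row_degree (reindex_inj (mulgI b^-1)).
apply: eq_big => [e|e _]; first by rewrite /= dcosetMl ?groupV.
by rewrite !mulgA mulgK -mulgA dcosetMl.
Qed.

Lemma col_degree_dcoset : {in E, forall e, col_degree e = col_degree y}.
Proof.
move=> _ /mem_dcoset[a aH [b bH ->]]; rewrite /col_degree (reindex_inj (mulIg a^-1)).
apply: eq_big => [d|d _]; first by rewrite /= dcosetMr ?groupV.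
by rewrite !mulgA mulgKV dcosetMr.
Qed.

Hypotheses (cardDE : #|D| = #|E|) (sFDE : F \subset D * E).

Lemma row_degree_gt0 : 0 < row_degree x.
Proof.
have /mulsgP[d e dD eE zde] := subsetP sFDE z (dcoset_refl H z).
by rewrite -(row_degree_dcoset dD) /row_degree (bigD1 e) //= -zde dcoset_refl.
Qed.

Lemma col_degree_eq : col_degree y = row_degree x.
Proof.
have : \sum_(d in D) row_degree d = \sum_(e in E) col_degree e by apply: exchange_big.
rewrite (eq_bigr _ row_degree_dcoset) (eq_bigr _ col_degree_dcoset) !sum_nat_const cardDE.
have E_gt0 : 0 < #|E| by apply/card_gt0P; exists y; apply: dcoset_refl.
by move/eqP; rewrite eqn_pmul2l // => /eqP.
Qed.

Definition row_nbhd r := [set e *: H | e in E & r * e \in F].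

(* Rows and left cosets both have |H| elements, so Hall's condition for the
   regular element graph on D x E descends to the rows. *)
Lemma row_hall_condition : hall_condition row_nbhd (rrep H @: D).
Proof.
move=> S sSR; set NS := \bigcup_(r in S) row_nbhd r.
have rowK r : r \in S -> rrep H r = r.
  by case/(subsetP sSR)/imsetP=> d _ ->; apply: rrepK.
have rowD r : r \in S -> r \in D.
  by case/(subsetP sSR)/imsetP=> d dD ->; rewrite rrep_dcoset.
pose U := [set d | rrep H d \in S].
have sUD : U \subset D by apply/subsetP=> d; rewrite inE => /rowD; rewrite rrep_dcoset.
have cardU : (#|S| * #|H|)%N = #|U| by rewrite card_rrep_preim.
have hallU : #|U| <= #|\bigcup_(d in U) [set e in E | (d * e)%g \in F]|.
  apply: (regular_hall_condition row_degree_gt0) => [d|e|].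
  - exact: row_degree_dcoset.
  - by move/col_degree_dcoset; rewrite col_degree_eq.
  - exact: sUD.
have sNU_NS : \bigcup_(d in U) [set e in E | (d * e)%g \in F] \subset cover NS.
  apply/bigcupsP=> d; rewrite inE => dS; apply/subsetP=> e.
  rewrite inE => /andP[eE deF]; apply/bigcupP; exists (e *: H); last exact: lcoset_refl.
  apply/bigcupP; exists (rrep H d) => //; apply/imsetP; exists e => //.
  by rewrite inE eE -(dcosetMl _ _ (mulgV_rrep H d)) mulgA mulgKV.
have cardNS : (#|cover NS| <= #|NS| * #|H|)%N.
  rewrite -sum_nat_const (leq_trans (leq_card_cover NS).1) //.
  apply: eq_leq; apply: eq_bigr => _ /bigcupP[r _ /imsetP[e _ ->]].
  exact: card_lcoset.
rewrite -(leq_pmul2r (cardG_gt0 H)).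
by rewrite cardU (leq_trans hallU) // (leq_trans (subset_leq_card sNU_NS) cardNS).
Qed.

Lemma dcoset_row_matching : exists t : gT -> gT,
  [/\ {in rrep H @: D, forall r, t r \in E}, {in rrep H @: D, forall r, r * t r \in H :* z}
    & {in rrep H @: D &, forall r r', t r *: H = t r' *: H -> r = r'}].
Proof.
have [g [gN gI]] := hall_marriage set0 row_hall_condition.
pose t r := repr (g r :&: r^-1 *: (H :* z)).
have tP r : r \in rrep H @: D -> [/\ t r \in E, r * t r \in H :* z & t r *: H = g r].
  case/gN/imsetP=> e; rewrite inE => /andP[eE /mem_dcoset[a aH [b bH re]]] ge.
  rewrite /t ge.
  have : e * b^-1 \in e *: H :&: r^-1 *: (H :* z).
    rewrite !inE mem_lcoset mulKg groupV bH mem_lcoset invgK mulgA re mulgK.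
    by rewrite mem_rcoset mulgK.
  move/mem_repr; rewrite inE => /andP[te tHz].
  split; last by apply/lcoset_eqP.
    by case/lcosetP: te => h hH ->; rewrite dcosetMr.
  by rewrite mem_lcoset invgK in tHz.
exists t; split=> [r /tP[]//|r /tP[]//|r r' rR r'R].
by case: (tP r rR) (tP r' r'R) => _ _ -> [_ _ ->]; apply: gI.
Qed.

End RowMatching.

Section Twist.
Variables (gT : finGroupType) (H : {group gT}) (z : gT).
Local Notation C := (H :&: H :^ z^-1)%G.
Local Notation Cz := (H :&: H :^ z)%G.

Lemma repr_rcosets (K : {group gT}) X :
  K \subset H -> X \in rcosets K H -> repr X \in H /\ K :* repr X = X.
Proof.
move=> sKH /rcosetsP[q qH ->]; rewrite rcoset_repr; split=> //.
have /rcosetP[c cK ->] := mem_repr_rcoset K q.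
by rewrite groupM // (subsetP sKH).
Qed.

Lemma twisted_bijection : exists L : gT -> gT,
  [/\ {in H, forall q, L q \in H}, {in H &, injective L}
    & {in C, forall c, {in H, forall q, L (c * q) = c ^ z * L q}}].
Proof.
have sCH : C \subset H := subsetIl _ _; have sCzH : Cz \subset H := subsetIl _ _.
have leCCz : #|rcosets C H| <= #|rcosets Cz H|.
  change (#|H : C| <= #|H : Cz|).
  by rewrite -!divgS //= -(cardJg (H :&: H :^ z^-1) z) conjIg conjsgKV setIC.
have [tau [tauP tauI]] := sdr_of_leq_card set0 leCCz.
pose L q := (q * (repr (C :* q))^-1) ^ z * repr (tau (C :* q)).
have CqR q : q \in H -> C :* q \in rcosets C H by move=> qH; rewrite -rcosetE imset_f.
have rhoC q : q * (repr (C :* q))^-1 \in C.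
  by have /rcosetP[c cC ->] := mem_repr_rcoset C q; rewrite invMg mulKVg groupV.
have conjC c : c \in C -> c ^ z \in Cz.
  by rewrite !inE mem_conjgV memJ_conjg => /andP[-> ->].
have tauL q : q \in H -> tau (C :* q) = Cz :* L q.
  move=> qH; rewrite /L rcosetM (rcoset_id (conjC _ (rhoC q))).
  by rewrite (repr_rcosets sCzH (tauP _ (CqR q qH))).2.
exists L; split=> [q qH|q q' qH q'H Lqq'|c cC q qH].
- apply: groupM; first exact: subsetP sCzH _ (conjC _ (rhoC q)).
  exact: (repr_rcosets sCzH (tauP _ (CqR q qH))).1.
- have eqCq : C :* q = C :* q' by apply: tauI; rewrite ?CqR // !tauL // Lqq'.
  by move: Lqq'; rewrite /L eqCq => /mulIg /conjg_inj /mulIg.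
- by rewrite /L rcosetM rcoset_id // mulgA -(mulgA c) conjMg mulgA.
Qed.

Lemma rrep_coset_injection x : #|dcoset H x| <= #|dcoset H z| ->
  exists io : gT -> gT, {in rrep H @: dcoset H x, forall r, io r \in H} /\
    {in rrep H @: dcoset H x &, forall r r', C :* io r = C :* io r' -> r = r'}.
Proof.
move=> leDF; have sCH : C \subset H := subsetIl _ _.
have leRC : #|rrep H @: dcoset H x| <= #|rcosets C H|.
  rewrite -(leq_pmul2r (cardG_gt0 H)) -card_rrep_preim; last first.
    by move=> _ /imsetP[d _ ->]; apply: rrepK.
  have -> : (#|rcosets C H| * #|H|)%N = #|dcoset H z| by rewrite card_dcoset mulnC.
  apply/(leq_trans _ leDF)/subset_leq_card/subsetP=> d; rewrite inE => /imsetP[d' d'D].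
  by move/(congr1 (fun r => r \in dcoset H x)); rewrite !rrep_dcoset d'D => ->.
have [tau [tauP tauI]] := sdr_of_leq_card set0 leRC.
exists (fun r => repr (tau r)); split=> [r /tauP/(repr_rcosets sCH)[]//|r r' rR r'R].
by rewrite (repr_rcosets sCH (tauP r rR)).2 (repr_rcosets sCH (tauP r' r'R)).2; apply: tauI.
Qed.

End Twist.

Section LocalMapping.
Variables (gT : finGroupType) (H : {group gT}) (f0 : gT -> gT).
Hypotheses (f0H : {in H, forall q, f0 q \in H}) (f0I : {in H &, injective f0})
  (f0C : {in H &, injective (fun q => q * f0 q)}).

Section TwistedCancel.
Variables (z : gT) (L : gT -> gT).
Local Notation C := (H :&: H :^ z^-1).
Hypotheses (LH : {in H, forall q, L q \in H}) (LI : {in H &, injective L})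
  (LT : {in C, forall c, {in H, forall q, L (c * q) = c ^ z * L q}}).

Lemma twisted_cancel p p' e e' : p \in H -> p' \in H -> e \in H -> e' \in H ->
    p * z * L (e * f0 (p * e)) = p' * z * L (e' * f0 (p' * e')) ->
  C :* e = C :* e' /\ p * e = p' * e'.
Proof.
move=> pH p'H eH e'H; set X := e * f0 _; set X' := e' * f0 _ => eq_pzL.
have XH : X \in H by rewrite groupM // f0H // groupM.
have X'H : X' \in H by rewrite groupM // f0H // groupM.
set c := p'^-1 * p; have cH : c \in H by rewrite groupM ?groupV.
have cz : c ^ z = L X' * (L X)^-1.
  have pz : p * z = p' * z * (L X' * (L X)^-1) by rewrite mulgA -eq_pzL mulgK.
  by rewrite conjgE /c !mulgA -(mulgA _ p) pz !mulgA mulgKV mulVg mul1g.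
have cC : c \in C by rewrite inE cH mem_conjgV cz groupM ?groupV ?LH.
have cX : c * X = X' by apply: LI; [exact: groupM | exact: X'H | rewrite LT // cz mulgKV].
have pe : p * e = p' * e'.
  have pX : p * X = p' * X' by rewrite -cX /c -mulgA mulKVg.
  by apply: f0C; rewrite ?groupM //= -!mulgA.
split=> //; have -> : e' = c * e by rewrite /c -mulgA pe mulKg.
by rewrite rcosetM (rcoset_id cC).
Qed.

End TwistedCancel.

Definition complete_map (D E F : {set gT}) (f : gT -> gT) :=
  [/\ {in D, forall d, f d \in E}, {in D &, injective f},
      {in D, forall d, d * f d \in F} & {in D &, injective (fun d => d * f d)}].

Section Construction.
Variables (x y z : gT) (t io L : gT -> gT).
Local Notation D := (dcoset H x).
Local Notation E := (dcoset H y).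
Local Notation F := (dcoset H z).
Local Notation Rows := (rrep H @: D).
Local Notation C := (H :&: H :^ z^-1).
Hypotheses (tE : {in Rows, forall r, t r \in E})
  (tHz : {in Rows, forall r, r * t r \in H :* z})
  (tI : {in Rows &, forall r r', t r *: H = t r' *: H -> r = r'}).
Hypotheses (ioH : {in Rows, forall r, io r \in H})
  (ioI : {in Rows &, forall r r', C :* io r = C :* io r' -> r = r'}).
Hypotheses (LH : {in H, forall q, L q \in H}) (LI : {in H &, injective L})
  (LT : {in C, forall c, {in H, forall q, L (c * q) = c ^ z * L q}}).

Definition local_map d :=
  let r := rrep H d in t r * L (io r * f0 (d * t r * z^-1 * io r)).

Lemma local_map_data d : d \in D ->
  let r := rrep H d in let X := io r * f0 (d * t r * z^-1 * io r) in
  [/\ r \in Rows, d * t r * z^-1 \in H, X \in H & local_map d = t r * L X].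
Proof.
move=> dD r X; have rR : r \in Rows by apply: imset_f.
have dtzH : d * t r * z^-1 \in H.
  have -> : d * t r * z^-1 = d * r^-1 * (r * t r * z^-1) by rewrite !mulgA mulgKV.
  by rewrite groupM ?mulgV_rrep // -mem_rcoset tHz.
by split=> //; rewrite groupM ?ioH // f0H // groupM ?ioH.
Qed.

Lemma local_map_in : {in D, forall d, local_map d \in E}.
Proof. by move=> d /local_map_data[rR _ XH ->]; rewrite dcosetMr ?LH ?tE. Qed.

Lemma local_map_inj : {in D &, injective local_map}.
Proof.
move=> d d' /local_map_data[rR dtzH XH ->] /local_map_data[r'R d'tzH X'H ->] eq_tL.
have tL_lcoset s Y : Y \in H -> (t s * L Y) *: H = t s *: H.
  by move=> YH; apply/lcoset_eqP; rewrite mem_lcoset mulKg LH.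
have eq_r : rrep H d = rrep H d'.
  by apply: tI; rewrite // -(tL_lcoset _ _ XH) eq_tL tL_lcoset.
move: X'H d'tzH eq_tL; rewrite -eq_r => X'H d'tzH /mulgI /LI -/(_ XH X'H) /mulgI.
move/f0I => -/(_ (groupM dtzH (ioH rR)) (groupM d'tzH (ioH rR))).
by move=> /mulIg /mulIg /mulIg.
Qed.

Lemma mul_local_mapE d : let r := rrep H d in let p := d * t r * z^-1 in
  d * local_map d = p * z * L (io r * f0 (p * io r)).
Proof. by rewrite /local_map /= !mulgA mulgKV. Qed.

Lemma mul_local_map_in : {in D, forall d, d * local_map d \in F}.
Proof.
move=> d /local_map_data[rR dtzH XH _]; rewrite mul_local_mapE.
by apply/mem_dcoset; exists (d * t (rrep H d) * z^-1) => //; eexists; first exact: LH XH.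
Qed.

Lemma mul_local_map_inj : {in D &, injective (fun d => d * local_map d)}.
Proof.
move=> d d' /local_map_data[rR dtzH _ _] /local_map_data[r'R d'tzH _ _] /=.
rewrite !mul_local_mapE => /(twisted_cancel LH LI LT dtzH d'tzH (ioH rR) (ioH r'R)).
by case=> /(ioI rR r'R) ->; move=> /mulIg /mulIg /mulIg.
Qed.

End Construction.

Lemma dcoset_complete_map x y z :
    #|dcoset H x| = #|dcoset H y| -> #|dcoset H x| = #|dcoset H z| ->
    dcoset H z \subset dcoset H x * dcoset H y ->
  exists f, complete_map (dcoset H x) (dcoset H y) (dcoset H z) f.
Proof.
move=> cardDE cardDF sFDE.
have [t [tE tHz tI]] := dcoset_row_matching cardDE sFDE.
have [io [ioH ioI]] := rrep_coset_injection (eq_leq cardDF).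
have [L [LH LI LT]] := twisted_bijection H z.
exists (local_map z t io L); split.
- exact: local_map_in tE tHz ioH LH.
- exact: local_map_inj tHz tI ioH LH LI.
- exact: mul_local_map_in tHz ioH LH.
- exact: mul_local_map_inj tHz ioH ioI LH LI LT.
Qed.

End LocalMapping.

Lemma double_cosets_partition (gT : finGroupType) (G H : {group gT}) :
  H \subset G -> partition (double_cosets H G) G.
Proof.
move=> sHG; apply/and3P; split.
- apply/eqP/setP=> d; apply/bigcupP/idP=> [[_ /imsetP[x xG ->]]|dG].
    by case/mem_dcoset=> a aH [b bH ->]; rewrite !groupM // (subsetP sHG).
  by exists (dcoset H d); [apply: imset_f | apply: dcoset_refl].
- apply/trivIsetP=> _ _ /imsetP[x _ ->] /imsetP[y _ ->]; rewrite -!/(dcoset H _).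
  apply: contraR => /pred0Pn[d /andP[dx dy]].
  by rewrite -(dcoset_transl dx) (dcoset_transl dy).
- apply/imsetP=> -[x _ /setP/(_ x)]; rewrite inE.
  by move: (dcoset_refl H x); rewrite /dcoset => ->.
Qed.

Lemma pblock_glue_inj (T : finType) (P : {set {set T}}) (A : {set T})
    (sigma : {set T} -> {set T}) (v : {set T} -> T -> T) :
    partition P A -> is_perm_on P sigma ->
    (forall D, D \in P -> {in D, forall d, v D d \in sigma D} /\ {in D &, injective (v D)}) ->
  {in A &, injective (fun d => v (pblock P d) d)}.
Proof.
case/and3P=> /eqP coverP trivP _ [sigmaP sigmaI] vP d d'.
rewrite -coverP => dA d'A /=; set D := pblock P d; set D' := pblock P d' => eq_v.
have DP : D \in P := pblock_mem dA; have D'P : D' \in P := pblock_mem d'A.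
have dD : d \in D by rewrite mem_pblock.
have d'D' : d' \in D' by rewrite mem_pblock.
have [vD vI] := vP _ DP; have [vD' _] := vP _ D'P.
have eqD : D = D'.
  apply: sigmaI => //; rewrite -(def_pblock trivP (sigmaP _ DP) (vD _ dD)) eq_v.
  exact: def_pblock trivP (sigmaP _ D'P) (vD' _ d'D').
by apply: vI => //; [rewrite eqD | rewrite eq_v eqD].
Qed.

Lemma complete_mapping_of_partition (gT : finGroupType) (G : {group gT})
    (P : {set {set gT}}) (phi psi : {set gT} -> {set gT}) :
    partition P G -> is_perm_on P phi -> is_perm_on P psi ->
    (forall D, D \in P -> exists f, complete_map D (phi D) (psi D) f) ->
  has_complete_mapping G.
Proof.
move=> partP phiP psiP localP.
have /fin_all_exists[F FP] :
    forall D, exists f, D \in P -> complete_map D (phi D) (psi D) f.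
  by move=> D; have [/localP[f fP]|_] := boolP (D \in P); [exists f | exists id].
exists (fun d => F (pblock P d) d); split.
- case/and3P: partP => /eqP coverP _ _ d; rewrite -coverP => dP.
  have DP := pblock_mem dP; have [FDin _ _ _] := FP _ DP.
  by apply: (subsetP (bigcup_sup _ (phiP.1 _ DP))); apply: FDin; rewrite mem_pblock.
- by apply: pblock_glue_inj partP phiP _ => D /FP[].
- by apply: (pblock_glue_inj (v := fun D d => d * F D d)) partP psiP _ => D /FP[].
Qed.

Unset Implicit Arguments.

Theorem corollary3p3 (gT : finGroupType) (G H : {group gT})
  (phi psi : {set gT} -> {set gT}) :
  H \subset G ->
  has_complete_mapping H ->
  is_perm_on (double_cosets H G) phi ->
  is_perm_on (double_cosets H G) psi ->
  (forall D, D \in double_cosets H G ->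
     [/\ #|D| = #|phi D|, #|D| = #|psi D| & psi D \subset D * phi D]) ->
  has_complete_mapping G.
Proof.
move=> sHG [f0 [f0H f0I f0C]] phiP psiP hyp.
apply: (complete_mapping_of_partition (double_cosets_partition sHG) phiP psiP).
move=> D DP; have [cardDE cardDF sFDE] := hyp _ DP.
have /imsetP[y _ Ey] := phiP.1 _ DP; have /imsetP[z _ Fz] := psiP.1 _ DP.
have /imsetP[x _ Dx] := DP; rewrite Ey Fz Dx in cardDE cardDF sFDE *.
exact: (dcoset_complete_map f0H f0I f0C cardDE cardDF sFDE).
Qed.
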